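(* Let $M$ be the star matrix of a partition of the hypercube ${\bf Z}_q^n$ into subcubes all of the same dimension, and suppose $M$ contains a submatrix $T$ which is a transfractal. Then all rows of $M$ that pass through $T$ coincide in every column of $M$ not belonging to $T$; that is, for every column $s$ of $M$ not among the columns of $T$, all rows of $T$ have the same entry (the same element of ${\bf Z}_q\cup\{*\}$) in column $s$.
   Context: A subcube of ${\bf Z}_q^n$ is obtained by fixing some coordinates and letting the others run through ${\bf Z}_q$; its dimension is the number of free coordinates, and its star pattern is the vector over ${\bf Z}_q\cup\{*\}$ with the fixed values in fixed coordinates and $*$ in free ones. The star matrix of a partition of ${\bf Z}_q^n$ into subcubes is the matrix whose rows are the star patterns of the subcubes. Fractal matrices: $M_{q,0}$ has one row and zero columns; for $m\ge1$, $M_{q,m}$ consists of $q$ horizontal blocks indexed by $a=0,\dots,q-1$, each with $q^{m-1}$ rows; its first column has entry $a$ in every row of block $a$; its remaining columns are divided into $q$ vertical stripes of width equal to the number of columns of $M_{q,m-1}$, and in block $a$ the $a$-th stripe is a copy of $M_{q,m-1}$ while other stripes of block $a$ are all $*$. A fractal matrix is any matrix obtained from some $M_{q,m}$ ($m\ge1$) by permuting rows and columns. A submatrix $T$ of $M$ (given by a set of rows and a set of columns, not necessarily consecutive) is a transfractal if $T$ is a fractal matrix (with the same $q$) and each column of $M$ used by $T$ contains only $*$ in all rows of $M$ not used by $T$. *)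

From mathcomp Require Import all_boot.
Set Implicit Arguments. Unset Strict Implicit. Unset Printing Implicit Defensive.

(* Entries of a star matrix: [Some a] is the element a of Z_q (represented
   as 'I_q), [None] is the star symbol. *)
Definition entry (q : nat) := option 'I_q.

Definition star_matrix (q n k : nat) := 'I_k -> 'I_n -> entry q.

Definition in_subcube (q n : nat) (p : 'I_n -> entry q) (x : 'I_n -> 'I_q) : Prop :=
  forall j, p j = None \/ p j = Some (x j).

Definition subcube_dim (q n : nat) (p : 'I_n -> entry q) : nat :=
  #|[set j | p j == None]|.

Definition is_partition_star_matrix (q n k : nat) (M : star_matrix q n k) : Prop :=
  forall x : 'I_n -> 'I_q,
    exists i, in_subcube (M i) x /\ forall i', in_subcube (M i') x -> i' = i.

Fixpoint fractal_cols (q m : nat) : nat :=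
  match m with
  | 0 => 0
  | S m' => (q * fractal_cols q m').+1
  end.

(* Entries of M_{q,m}, rows indexed by r < q^m, columns by c < fractal_cols q m,
   numbered from 0; entries are option nat (None stands for the star). *)
Fixpoint fractal_entry (q m r c : nat) : option nat :=
  match m with
  | 0 => None
  | S m' =>
      let a := r %/ q ^ m' in
      if c == 0 then Some a
      else
        let c' := c.-1 in
        let w := fractal_cols q m' in
        if c' %/ w == a then fractal_entry q m' (r %% q ^ m') (c' %% w)
        else None
  end.

(* The submatrix of M with row set R and column set C is a fractal matrix:
   it is obtained from some M_{q,m}, m >= 1, by permuting rows and columns,
   i.e. there are bijections R -> [0, q^m) and C -> [0, fractal_cols q m)
   under which the entries agree. *)
Definition is_fractal_submatrix (q n k : nat) (M : star_matrix q n k)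
    (R : {set 'I_k}) (C : {set 'I_n}) : Prop :=
  exists m, 1 <= m /\
  exists (f : 'I_k -> nat) (g : 'I_n -> nat),
    {in R &, injective f} /\
    (forall i, i \in R -> f i < q ^ m) /\
    (forall r, r < q ^ m -> exists2 i, i \in R & f i = r) /\
    {in C &, injective g} /\
    (forall j, j \in C -> g j < fractal_cols q m) /\
    (forall c, c < fractal_cols q m -> exists2 j, j \in C & g j = c) /\
    (forall i j, i \in R -> j \in C ->
       omap (@nat_of_ord q) (M i j) = fractal_entry q m (f i) (g j)).

Definition is_transfractal (q n k : nat) (M : star_matrix q n k)
    (R : {set 'I_k}) (C : {set 'I_n}) : Prop :=
  is_fractal_submatrix M R C /\
  (forall i j, i \notin R -> j \in C -> M i j = None).

(* Two distinct rows of a fractal matrix carry distinct fixed values in a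
   common column, so distinct rows of T describe disjoint subcubes.  Hence if
   a point of one row of T has its T-coordinates overwritten by the fixed
   values of another row of T, the new point lies in that other row: a row
   outside T is all stars on the columns of T, so containing the new point it
   would also contain the old one.  Choosing the old point in row i1 with its
   coordinate at s, if free, different from the entry of row i2 at s forces
   row i1 to be fixed at s with the same value as row i2. *)

From mathcomp Require Import all_boot.
From mathcomp Require Import zify.

Set Implicit Arguments.
Unset Strict Implicit.
Unset Printing Implicit Defensive.

Definition clash (A : eqType) (u v : option A) : bool :=
  [&& u != None, v != None & u != v].

Lemma clash_Some (A : eqType) (a b : A) : clash (Some a) (Some b) = (a != b).
Proof. by rewrite /clash (inj_eq (@Some_inj _)). Qed.

Lemma clash_omap (A B : eqType) (h : A -> B) (u v : option A) :
  injective h -> clash (omap h u) (omap h v) = clash u v.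
Proof.
move=> h_inj; case: u => [a|]; case: v => [b|] //=.
by rewrite !clash_Some inj_eq.
Qed.

Lemma fractal_rows_clash q m r1 r2 :
  r1 < q ^ m -> r2 < q ^ m -> r1 != r2 ->
  exists2 c, c < fractal_cols q m &
    clash (fractal_entry q m r1 c) (fractal_entry q m r2 c).
Proof.
elim: m r1 r2 => [|m IHm] r1 r2 r1_lt r2_lt r12.
  by rewrite expn0 in r1_lt r2_lt; lia.
have qm_gt0 : 0 < q ^ m by rewrite expnS in r1_lt; nia.
have [a12 | a12] := eqVneq (r1 %/ q ^ m) (r2 %/ q ^ m); last first.
  by exists 0 => //=; rewrite clash_Some.
have rem12 : r1 %% q ^ m != r2 %% q ^ m.
  apply: contra r12 => /eqP rem12.
  by rewrite (divn_eq r1 (q ^ m)) (divn_eq r2 (q ^ m)) a12 rem12.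
have [c c_lt clash_c] := IHm _ _ (ltn_pmod _ qm_gt0) (ltn_pmod _ qm_gt0) rem12.
have a1_lt : r1 %/ q ^ m < q by rewrite ltn_divLR // -expnS.
exists (r1 %/ q ^ m * fractal_cols q m + c).+1; first by rewrite /=; nia.
have w_gt0 : 0 < fractal_cols q m by lia.
rewrite /= divnMDl // (divn_small c_lt) addn0.
by rewrite modnMDl (modn_small c_lt) -a12 eqxx.
Qed.

Lemma in_subcube_odflt q n (p : 'I_n -> entry q) (y : 'I_n -> 'I_q) :
  in_subcube p (fun j => odflt (y j) (p j)).
Proof. by move=> j; case: (p j) => [a|]; [right | left]. Qed.

Section Transfractal.

Variables (q n k : nat) (M : star_matrix q n k).
Variables (R : {set 'I_k}) (C : {set 'I_n}).
Hypothesis M_partition : is_partition_star_matrix M.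
Hypothesis T_fractal : is_fractal_submatrix M R C.
Hypothesis T_stars : forall i j, i \notin R -> j \in C -> M i j = None.

Lemma partition_subcube_uniq i i' x :
  in_subcube (M i) x -> in_subcube (M i') x -> i = i'.
Proof.
move=> x_i x_i'; have [u [_ u_uniq]] := M_partition x.
by rewrite (u_uniq _ x_i) (u_uniq _ x_i').
Qed.

Lemma transfractal_rows_clash u v : u \in R -> v \in R -> u != v ->
  exists2 c, c \in C & clash (M u c) (M v c).
Proof.
have [m [_ [f [g [f_inj [f_lt [_ [_ [_ [g_onto entries]]]]]]]]]] := T_fractal.
move=> uR vR uv.
have fuv : f u != f v by apply: contra uv => /eqP /f_inj ->.
have [c c_lt clash_c] := fractal_rows_clash (f_lt _ uR) (f_lt _ vR) fuv.
have [j jC gj] := g_onto _ c_lt.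
by exists j => //; rewrite -(clash_omap _ _ val_inj) !entries // gj.
Qed.

Lemma transfractal_regraft j1 j2 x : j1 \in R -> j2 \in R ->
  in_subcube (M j1) x ->
  in_subcube (M j2) (fun j => if j \in C then odflt (x j) (M j2 j) else x j).
Proof.
move=> j1R j2R x_j1; set x' := fun j => _.
have [u [x'_u _]] := M_partition x'.
have [uR | uNR] := boolP (u \in R).
  have [<- // | uj2] := eqVneq u j2.
  have [c cC] := transfractal_rows_clash uR j2R uj2.
  have x'_c : M j2 c != None -> M j2 c = Some (x' c).
    by rewrite /x' cC; case: (M j2 c).
  case: (x'_u c) => -> //.
  by case/and3P=> _ /x'_c ->; rewrite eqxx.
have x_u : in_subcube (M u) x.
  move=> j; have [jC | jNC] := boolP (j \in C); first by left; apply: T_stars.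
  by have := x'_u j; rewrite /x' (negbTE jNC).
by move: uNR; rewrite (partition_subcube_uniq x_u x_j1) j1R.
Qed.

Lemma transfractal_fixed_entry s j1 j2 b b' : s \notin C ->
  j1 \in R -> j2 \in R -> M j2 s = Some b -> b' != b -> M j1 s = Some b.
Proof.
move=> sNC j1R j2R j2s b'b.
pose y j := if j == s then b' else b.
have := transfractal_regraft j1R j2R (in_subcube_odflt (M j1) y) s.
rewrite (negbTE sNC) j2s /y eqxx => -[// | [bs]].
by move: bs b'b; case: (M j1 s) => [a|] /= ->; rewrite ?eqxx.
Qed.

End Transfractal.

Theorem lemma4 (q n k : nat) (M : star_matrix q n k)
    (R : {set 'I_k}) (C : {set 'I_n}) :
  is_partition_star_matrix M ->
  (forall i i' : 'I_k, subcube_dim (M i) = subcube_dim (M i')) ->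
  is_transfractal M R C ->
  forall s : 'I_n, s \notin C ->
  forall i1 i2 : 'I_k, i1 \in R -> i2 \in R -> M i1 s = M i2 s.
Proof.
move=> M_partition _ [T_fractal T_stars] s sNC i1 i2 i1R i2R.
have [-> // | i12] := eqVneq i1 i2.
have [c _ clash_c] := transfractal_rows_clash T_fractal i1R i2R i12.
have exists_other (b : 'I_q) : exists b', b' != b.
  case: (M i1 c) (M i2 c) clash_c => [a1|] // [a2|] //.
  rewrite clash_Some => a12.
  by have [<- | a1b] := eqVneq a1 b; [exists a2; rewrite eq_sym | exists a1].
have fixed := transfractal_fixed_entry M_partition T_fractal T_stars sNC.
case e2: (M i2 s) => [b|].
  by have [b' b'b] := exists_other b; apply: fixed e2 b'b.
case e1: (M i1 s) => [a|] //.
have [a' a'a] := exists_other a.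
by rewrite (fixed _ _ _ _ i2R i1R e1 a'a) in e2.
Qed.
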